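(* Consider the causal adversarial multi-path network model described in the context, with $C$ links of unit capacity, overwrite jamming, no feedback and no secrecy requirement. For any adversary vector $\vec z=(z_{rw},z_{ro},z_{wo})$ with $z_{rw}+z_{ro}+z_{wo}\le C$, the capacity is $$R^{ow}_j(C,\vec z)=\begin{cases} C-(z_{rw}+z_{wo}) & \text{if } 2z_{wo}+2z_{rw}<C,\\ 0 & \text{otherwise.}\end{cases}$$
   Context: Model. A sender (Alice) communicates with a receiver (Bob) over $C$ parallel directed noiseless links $L_1,\dots,L_C$; in the equal-capacity case each link has unit capacity: over a block of $n$ time slots each link carries a length-$n$ word (one unit of information per time slot; the links are taken in the large-alphabet regime, i.e. symbols may be grouped into elements of finite fields $\mathbb F_{2^b}$ with $b$ growing with $n$). A code of block length $n$ and rate $R$ has message $M$ uniform on $\{0,1\}^{nR}$; the encoder is stochastic, using private randomness of Alice unknown to the adversary, and maps the message and randomness to codewords $\vec X_1,\dots,\vec X_C$ (row $i$ sent on $L_i$). The decoder maps the received words $\vec Y_1,\dots,\vec Y_C$ to an estimate $\hat M$. Adversary. An adversary (Calvin), who knows the encoder and decoder, selects pairwise disjoint link sets $Z_{rw},Z_{ro},Z_{wo}$ (unknown to Alice and Bob) with $|Z_{rw}|\le z_{rw}$, $|Z_{ro}|\le z_{ro}$, $|Z_{wo}|\le z_{wo}$; he can read (eavesdrop) the links in $Z_r=Z_{rw}\cup Z_{ro}$ and write (jam) the links in $Z_w=Z_{rw}\cup Z_{wo}$. Write $z_r=z_{rw}+z_{ro}$, $z_w=z_{rw}+z_{wo}$,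 $\vec z=(z_{rw},z_{ro},z_{wo})$. The adversary is causal: at each time $t$ his jamming of the $t$-th symbols of links in $Z_w$ may depend only on the first $t$ symbols observed on the links in $Z_r$ (and his own randomness). Under additive jamming, the received word on link $i$ is $\vec Y_i=\vec X_i+\vec E_i$ where $\vec E_i$ is chosen by Calvin and $\vec E_i=0$ for $i\notin Z_w$. Under overwrite jamming, $\vec Y_i=\vec E_i$ for $i\in Z_w$ (Calvin replaces the symbols by his own) and $\vec Y_i=\vec X_i$ otherwise. Reliability and capacity. Rate $R$ is achievable if for every $\varepsilon>0$ and all sufficiently large $n$ there is a code of block length $n$ and rate $R$ with $\Pr[\hat M\neq M]<\varepsilon$ against every admissible causal adversary strategy; the capacity is the supremum of achievable rates. (Without feedback, the encoder's output depends only on the message and Alice's randomness.) *)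

From mathcomp Require Import all_boot.
From Stdlib Require Import Reals.

Set Implicit Arguments.
Unset Strict Implicit.
Unset Printing Implicit Defensive.

(* A symbol sent in one time slot on one link: an element of {0,1}^b
   (i.e. of F_{2^b}); one symbol = one unit of information. *)
(* A "channel word": row i (link L_i), column t (time slot t). *)
Definition cword (C n b : nat) := {ffun 'I_C -> {ffun 'I_n -> b.-tuple bool}}.

Definition rsum (T : finType) (F : T -> R) : R := \big[Rplus/0%R]_(t : T) F t.

Definition is_dist (T : finType) (p : T -> R) : Prop :=
  (forall t, (0 <= p t)%R) /\ rsum p = 1%R.

(* A code of block length n, symbol width b, with k message bits.
   The encoder is stochastic via Alice's private randomness rA ~ pA;
   without feedback the whole codeword is a function of (message, randomness). *)
Record code (C n b k : nat) := Code {
  rA : finType;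
  pA : rA -> R;
  enc : k.-tuple bool -> rA -> cword C n b;
  dec : cword C n b -> k.-tuple bool }.

(* An adversary strategy: the link sets, his own randomness rC ~ pC, and the
   symbol jam r i t X he writes on link i at time t, given (a priori) the
   whole transmitted word X; causality is imposed separately. *)
Record adversary (C n b : nat) := Adversary {
  Zrw : {set 'I_C};
  Zro : {set 'I_C};
  Zwo : {set 'I_C};
  rC : finType;
  pC : rC -> R;
  jam : rC -> 'I_C -> 'I_n -> cword C n b -> b.-tuple bool }.

Arguments jam {C n b} a _ _ _ _.
Arguments pC {C n b} a _.
Arguments pA {C n b k} c _.
Arguments enc {C n b k} c _ _.
Arguments dec {C n b k} c _.

Definition Zr C n b (a : adversary C n b) := Zrw a :|: Zro a.
Definition Zw C n b (a : adversary C n b) := Zrw a :|: Zwo a.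

Definition causal C n b (a : adversary C n b) : Prop :=
  forall (r : rC a) (i : 'I_C) (t : 'I_n) (X X' : cword C n b),
    (forall (j : 'I_C) (s : 'I_n), j \in Zr a -> (s <= t)%N -> X j s = X' j s) ->
    jam a r i t X = jam a r i t X'.

Definition admissible (zrw zro zwo : nat) C n b (a : adversary C n b) : Prop :=
  [disjoint Zrw a & Zro a] /\ [disjoint Zrw a & Zwo a] /\
  [disjoint Zro a & Zwo a] /\
  (#|Zrw a| <= zrw)%N /\ (#|Zro a| <= zro)%N /\ (#|Zwo a| <= zwo)%N /\
  is_dist (pC a) /\ causal a.

Definition received_ow C n b (a : adversary C n b) (r : rC a) (X : cword C n b)
  : cword C n b :=
  [ffun i => [ffun t => if i \in Zw a then jam a r i t X else X i t]].

Definition perr_ow C n b k (c : code C n b k) (a : adversary C n b) : R :=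
  rsum (fun m : k.-tuple bool =>
    (/ INR (expn 2 k) *
     rsum (fun x : rA c => pA c x *
       rsum (fun r : rC a => pC a r *
         (if dec c (received_ow r (enc c m x)) == m then 0 else 1))))%R).

(* rate Rt (units of information per time slot per ... i.e. symbols per slot)
   is achievable: for every eps > 0 and all large n there is a symbol width
   b >= 1 and a code with floor(n*b*Rt) message bits (i.e. rate Rt) whose error
   probability is below eps against every admissible causal adversary. *)
Definition achievable_ow (C zrw zro zwo : nat) (Rt : R) : Prop :=
  forall eps : R, (0 < eps)%R ->
  exists N : nat, forall n : nat, (N <= n)%N ->
  exists (b k : nat) (c : code C n b k),
    (0 < b)%N /\
    (INR k <= INR n * INR b * Rt < INR k + 1)%R /\
    is_dist (pA c) /\
    (forall a : adversary C n b, admissible zrw zro zwo a ->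
       (perr_ow c a < eps)%R).

Definition capacity_ow_is (C zrw zro zwo : nat) (v : R) : Prop :=
  is_lub (achievable_ow C zrw zro zwo) v.

From HB Require Import structures.
From mathcomp Require Import all_boot all_algebra all_field.
From Stdlib Require Import Reals Lra Lia.
From mathcomp Require Import zify.

Set Implicit Arguments.
Unset Strict Implicit.
Unset Printing Implicit Defensive.

(* An adversary overwriting z_w = z_rw + z_wo links with a constant leaves Bob
   a function of the other (C - z_w) n b bits, so at most 2^((C - z_w) n b) messages are
   decoded correctly and no rate above C - z_w is achievable.  If 2 z_w >= C, the links
   split into two admissible written sets; the adversary on either set writes there the
   codeword of a message and randomness drawn from Alice's own distribution.  The word
   received for (true u, fake u') under the first adversary is the word received for
   (true u', fake u) under the second, so the two error probabilities add up to at least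
   1 - 2^-k and no positive rate is achievable.  Alice sends a Reed-Solomon codeword of dimension C - z_w across the
   links, then a uniform key K and, on every link, the hashes at K (polynomial
   evaluations) of all links' data.  A causal adversary commits to the corrupted data
   before K is revealed, so a corrupted link passes an honest hash with probability at
   most n/|F|; Bob trusts the links vouched for by more than z_w links and decodes the
   data from them. *)

Local Open Scope R_scope.

HB.instance Definition _ := Monoid.isComLaw.Build R R0 Rplus
  (fun x y z => esym (Rplus_assoc x y z)) Rplus_comm Rplus_0_l.

Section FiniteSums.
Variable T : finType.
Implicit Types (F G : T -> R) (c : R).

Lemma eq_rsum F G : F =1 G -> rsum F = rsum G.
Proof. by move=> eqFG; apply: eq_bigr. Qed.

Lemma rsum_le F G : (forall t, F t <= G t) -> rsum F <= rsum G.
Proof. by move=> leFG; rewrite /rsum; elim/big_ind2: _ => // *; lra. Qed.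

Lemma rsum_ge0 F : (forall t, 0 <= F t) -> 0 <= rsum F.
Proof. by move=> F_ge0; rewrite /rsum; elim/big_ind: _ => // *; lra. Qed.

Lemma rsumZ c F : rsum (fun t => c * F t) = c * rsum F.
Proof. by rewrite /rsum; elim/big_ind2: _ => [|x1 x2 y1 y2 -> ->|]; rewrite //=; ring. Qed.

Lemma rsumD F G : rsum (fun t => F t + G t) = rsum F + rsum G.
Proof. exact: big_split. Qed.

Lemma rsum_card (P : pred T) : rsum (fun t => if P t then 1 else 0) = INR #|P|.
Proof.
rewrite /rsum -big_mkcond -sum1_card.
by elim/big_ind2: _ => // x1 x2 y1 y2 -> ->; rewrite plus_INR.
Qed.

Lemma rsum_const c : rsum (fun _ : T => c) = INR #|T| * c.
Proof.
by rewrite -(rsum_card (@predT T)) Rmult_comm -rsumZ; apply: eq_rsum => t /=; ring.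
Qed.

Lemma rsum_ge_term F t0 : (forall t, 0 <= F t) -> F t0 <= rsum F.
Proof.
move=> F_ge0; rewrite /rsum (bigD1 t0) //=.
suff : 0 <= \big[Rplus/0]_(t | t != t0) F t by lra.
by elim/big_ind: _ => // *; lra.
Qed.

End FiniteSums.

Lemma exchange_rsum (T U : finType) (F : T -> U -> R) :
  rsum (fun t => rsum (F t)) = rsum (fun u => rsum (F^~ u)).
Proof. exact: exchange_big. Qed.

Lemma pair_rsum (T U : finType) (F : T * U -> R) :
  rsum F = rsum (fun t => rsum (fun u => F (t, u))).
Proof. by rewrite /rsum pair_big /=; apply: eq_bigr => -[]. Qed.

Definition expect (T : finType) (p : T -> R) (f : T -> R) : R :=
  rsum (fun t => p t * f t).

Section Expectation.
Variables (T : finType) (p : T -> R).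
Hypothesis p_dist : is_dist p.
Implicit Types (f g : T -> R) (c : R).

Lemma expect_le f g : (forall t, f t <= g t) -> expect p f <= expect p g.
Proof.
by case: p_dist => p_ge0 _ lefg; apply: rsum_le => t; apply: Rmult_le_compat_l.
Qed.

Lemma expect_const c : expect p (fun _ => c) = c.
Proof.
case: p_dist => _ p1; rewrite /expect.
by rewrite (eq_rsum (G := fun t => c * p t)) ?rsumZ ?p1 => [|t]; ring.
Qed.

Lemma expect_le_const f c : (forall t, f t <= c) -> expect p f <= c.
Proof. by move=> lefc; rewrite -(expect_const c); apply: expect_le. Qed.

Lemma expectB c f : expect p (fun t => c - f t) = c - expect p f.
Proof.
case: p_dist => _ p1; rewrite /expect.
rewrite (eq_rsum (G := fun t => c * p t + -1 * (p t * f t))) => [|t]; last by ring.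
by rewrite rsumD !rsumZ p1; ring.
Qed.

End Expectation.

Lemma eq_expect (T : finType) (p f g : T -> R) : f =1 g -> expect p f = expect p g.
Proof. by move=> efg; apply: eq_rsum => t; rewrite efg. Qed.

Lemma exchange_expect (T U : finType) (p : T -> R) (q : U -> R) (f : T -> U -> R) :
  expect p (fun t => expect q (f t)) = expect q (fun u => expect p (f^~ u)).
Proof.
rewrite /expect (eq_rsum (G := fun t => rsum (fun u => p t * (q u * f t u)))) => [|t].
  by rewrite exchange_rsum; apply: eq_rsum => u; rewrite -rsumZ; apply: eq_rsum => t; ring.
by rewrite rsumZ.
Qed.

Lemma expectD (T : finType) (p f g : T -> R) :
  expect p (fun t => f t + g t) = expect p f + expect p g.
Proof. by rewrite /expect -rsumD; apply: eq_rsum => t; ring. Qed.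

Lemma expect_rsum (T U : finType) (p : T -> R) (f : T -> U -> R) :
  expect p (fun t => rsum (f t)) = rsum (fun u => expect p (f^~ u)).
Proof.
by rewrite /expect -exchange_rsum; apply: eq_rsum => t; rewrite rsumZ.
Qed.

Lemma is_dist_uniform (T : finType) : (0 < #|T|)%nat -> is_dist (fun _ : T => / INR #|T|).
Proof.
move=> T_gt0; have T_pos : 0 < INR #|T| by apply: lt_0_INR; apply/ltP.
split=> [t|]; first by apply: Rlt_le; apply: Rinv_0_lt_compat.
by rewrite rsum_const; field; lra.
Qed.

Lemma is_dist_unit : is_dist (fun _ : unit => 1).
Proof. by split=> [t|]; [lra | rewrite rsum_const card_unit /=; lra]. Qed.

Lemma card_bits k : #|{: k.-tuple bool}| = expn 2 k.
Proof. by rewrite card_tuple card_bool. Qed.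

Lemma pow2_pos k : 0 < INR (expn 2 k).
Proof. by apply: lt_0_INR; apply/ltP; rewrite expn_gt0. Qed.

Definition unif_msg k (m : k.-tuple bool) : R := / INR (expn 2 k).

Lemma is_dist_unif_msg k : is_dist (@unif_msg k).
Proof.
by rewrite /unif_msg -card_bits; apply: is_dist_uniform; rewrite card_bits expn_gt0.
Qed.

Definition dec_err C n b k (c : code C n b k) (a : adversary C n b)
    (m : k.-tuple bool) (x : rA c) (r : rC a) : R :=
  if dec c (received_ow r (enc c m x)) == m then 0 else 1.
Arguments dec_err {C n b k} c a m x r.

Lemma perr_owE C n b k (c : code C n b k) (a : adversary C n b) :
  perr_ow c a =
  expect (@unif_msg k) (fun m => expect (pA c) (fun x => expect (pC a) (dec_err c a m x))).
Proof. by []. Qed.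

Definition code0 C n : code C n 1 0 :=
  @Code C n 1 0 unit (fun _ => 1) (fun _ _ => [ffun _ => [ffun _ => [tuple false]]])
     (fun _ => [tuple]).

Lemma achievable_ow0 C zrw zro zwo : achievable_ow C zrw zro zwo 0.
Proof.
move=> eps eps_gt0; exists 0%nat => n _.
exists 1%nat, 0%nat, (code0 C n); split=> //; split; first by rewrite /=; lra.
split=> [|a [_ [_ [_ [_ [_ [_ [pC_dist _]]]]]]]]; first exact: is_dist_unit.
rewrite perr_owE; apply: (Rle_lt_trans _ _ _ _ eps_gt0).
apply: (expect_le_const (is_dist_unif_msg 0)) => m.
apply: (expect_le_const is_dist_unit) => x.
apply: (expect_le_const pC_dist) => r.
by rewrite /dec_err (tuple0 m) /=; lra.
Qed.

Lemma perr_ow_ge_decoded C n b k (c : code C n b k) (a : adversary C n b) (M : nat) :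
  is_dist (pA c) -> is_dist (pC a) ->
  (forall x (r : rC a), (#|[pred m | dec c (received_ow r (enc c m x)) == m]| <= M)%nat) ->
  1 - INR M / INR (expn 2 k) <= perr_ow c a.
Proof.
move=> pA_dist pC_dist decM.
pose ok (m : k.-tuple bool) (x : rA c) (r : rC a) : R :=
  if dec c (received_ow r (enc c m x)) == m then 1 else 0.
have -> : perr_ow c a = 1 - expect (@unif_msg k)
    (fun m => expect (pA c) (fun x => expect (pC a) (ok m x))).
  rewrite perr_owE -(expectB (is_dist_unif_msg k)); apply: eq_expect => m.
  rewrite -(expectB pA_dist); apply: eq_expect => x.
  rewrite -(expectB pC_dist); apply: eq_expect => r.
  by rewrite /dec_err /ok; case: (_ == m); ring.
suff : expect (@unif_msg k) (fun m => expect (pA c) (fun x => expect (pC a) (ok m x)))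
       <= INR M / INR (expn 2 k) by lra.
rewrite exchange_expect; apply: expect_le_const => // x.
rewrite exchange_expect; apply: expect_le_const => // r.
rewrite /expect /unif_msg rsumZ rsum_card Rmult_comm /Rdiv.
apply: Rmult_le_compat_r; first by apply: Rlt_le; apply: Rinv_0_lt_compat; apply: pow2_pos.
by apply: le_INR; apply/leP; apply: decM.
Qed.

Definition ival C p q : {set 'I_C} := [set i : 'I_C | (p <= i < q)%nat].

Lemma card_ival C p q : (#|ival C p q| <= q - p)%nat.
Proof.
rewrite cardE -(size_map val) -(size_iota p (q - p)).
apply: uniq_leq_size => [|_ /mapP [i + ->]].
  by rewrite map_inj_uniq ?enum_uniq //; apply: val_inj.
by rewrite mem_enum /ival inE mem_iota /=; lia.
Qed.

Lemma disjoint_ival C p q p' q' : (q <= p')%nat -> [disjoint ival C p q & ival C p' q'].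
Proof. by move=> le_q_p'; rewrite -setI_eq0; apply/eqP/setP => i; rewrite !inE; lia. Qed.

Lemma admissible_ival zrw zro zwo C n b (a : adversary C n b) p q s :
  Zrw a = ival C p q -> Zro a = set0 -> Zwo a = ival C q s ->
  (q - p <= zrw)%nat -> (s - q <= zwo)%nat -> is_dist (pC a) -> causal a ->
  admissible zrw zro zwo a.
Proof.
move=> rwE roE woE rw_le wo_le pC_dist a_causal; rewrite /admissible rwE roE woE.
split; first by rewrite -setI_eq0 setI0.
split; first exact: disjoint_ival.
split; first by rewrite -setI_eq0 set0I.
split; first exact: leq_trans (card_ival _ _ _) rw_le.
split; first by rewrite cards0.
by split; first exact: leq_trans (card_ival _ _ _) wo_le.
Qed.

Lemma pow2_ratio_le_half e k : (e < k)%nat -> INR (expn 2 e) / INR (expn 2 k) <= / 2.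
Proof.
move=> lt_ek; have k_pos := pow2_pos k.
have : 2 * INR (expn 2 e) <= INR (expn 2 k).
  by rewrite -[2]/(INR 2) -mult_INR multE -expnS; apply: le_INR; apply/leP; rewrite leq_pexp2l.
move=> le2; apply: (Rmult_le_reg_r (INR (expn 2 k))) => //.
by rewrite /Rdiv Rmult_assoc Rinv_l; lra.
Qed.

Lemma achievable_bits_gt C zrw zro zwo (Rt eps : R) (D : nat) :
  achievable_ow C zrw zro zwo Rt -> INR D < Rt -> 0 < eps ->
  exists n b k (c : code C n b k), (n * b * D < k)%nat /\ is_dist (pA c) /\
    forall a : adversary C n b, admissible zrw zro zwo a -> perr_ow c a < eps.
Proof.
move=> ach lt_D_Rt eps_gt0.
have [N achN] := ach eps eps_gt0.
have [n0 n0_gt] := INR_unbounded (/ (Rt - INR D)).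
have [b [k [c [b_gt0 [[_ k_gt] [pA_dist perr_lt]]]]]] := achN _ (leq_maxl N n0).
exists (maxn N n0), b, k, c; split=> //.
set n := maxn N n0 in k_gt *.
have n_gap : 1 < INR n * (Rt - INR D).
  have le_n0_n : INR n0 <= INR n by apply: le_INR; apply/leP; apply: leq_maxr.
  have gap_pos : 0 < Rt - INR D by lra.
  have : / (Rt - INR D) * (Rt - INR D) = 1 by field; lra.
  nra.
have b_ge1 : 1 <= INR b by apply: (le_INR 1); apply/leP.
apply/ltP; apply: INR_lt; rewrite -!multE !mult_INR.
have := pos_INR n; have := pos_INR D; nra.
Qed.

Section Erasure.
Variables (C n b z zrw : nat).
Hypothesis zrw_le_z : (zrw <= z)%nat.

Definition erasure_adv : adversary C n b :=
  @Adversary C n b (ival C 0 zrw) set0 (ival C zrw z) unit (fun _ => 1)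
     (fun _ _ _ _ => nseq_tuple b false).

Lemma mem_Zw_erasure i : (i \in Zw erasure_adv) = (i < z)%nat.
Proof. by rewrite /Zw !inE; lia. Qed.

Lemma unjammed_link_proof (j : 'I_(C - z)) : (z + j < C)%nat.
Proof. by have := ltn_ord j; lia. Qed.

Definition unjammed_rows (X : cword C n b) :
    {ffun 'I_(C - z) -> {ffun 'I_n -> b.-tuple bool}} :=
  [ffun j => X (Ordinal (unjammed_link_proof j))].

Lemma received_erasure X X' : unjammed_rows X = unjammed_rows X' ->
  received_ow (a := erasure_adv) tt X = received_ow (a := erasure_adv) tt X'.
Proof.
move=> /ffunP eqXX'; apply/ffunP => i; apply/ffunP => t; rewrite !ffunE mem_Zw_erasure.
case: ltnP => // le_z_i.
have lt_iz : (i - z < C - z)%nat by have := ltn_ord i; lia.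
have := eqXX' (Ordinal lt_iz); rewrite !ffunE.
have -> : Ordinal (unjammed_link_proof (Ordinal lt_iz)) = i by apply: val_inj => /=; lia.
by move=> ->.
Qed.

Lemma card_decoded_erasure k (c : code C n b k) x :
  (#|[pred m | dec c (received_ow (a := erasure_adv) tt (enc c m x)) == m]|
     <= expn 2 (n * b * (C - z)))%nat.
Proof.
set ok := [pred m | _].
have -> : expn 2 (n * b * (C - z)) =
    #|{ffun 'I_(C - z) -> {ffun 'I_n -> b.-tuple bool}}|.
  by rewrite !card_ffun !card_ord card_tuple card_bool -!expnM; congr expn; lia.
have : {in ok &, injective (fun m => unjammed_rows (enc c m x))}.
  by move=> m1 m2 /eqP ok1 /eqP ok2 /received_erasure eq12; rewrite -ok1 -ok2 eq12.
by move/card_in_imset <-; apply: max_card.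
Qed.

End Erasure.

Lemma achievable_le_unjammed C zrw zro zwo (Rt : R) :
  achievable_ow C zrw zro zwo Rt -> Rt <= INR (C - (zrw + zwo)).
Proof.
move=> ach; set z := (zrw + zwo)%nat.
case: (Rle_lt_dec Rt (INR (C - z))) => // lt_D_Rt; exfalso.
have [n [b [k [c [bits_gt [pA_dist perr_lt]]]]]] :=
  achievable_bits_gt (eps := / 2) ach lt_D_Rt ltac:(lra).
have zrw_le_z : (zrw <= z)%nat by rewrite /z; lia.
have adm : admissible zrw zro zwo (erasure_adv C n b z zrw).
  apply: (@admissible_ival zrw zro zwo C n b _ 0 zrw z) => //; rewrite ?subn0 //.
  - by rewrite /z; lia.
  - exact: is_dist_unit.
have := @perr_ow_ge_decoded _ _ _ _ c (erasure_adv C n b z zrw) _ pA_dist is_dist_unit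
  (fun x _ => card_decoded_erasure zrw_le_z x).
have := pow2_ratio_le_half bits_gt; have := perr_lt _ adm; lra.
Qed.

Section Replay.
Variables (C n b k : nat) (c : code C n b k).
Hypothesis pA_dist : is_dist (pA c).

Definition msg_rand_dist (u : k.-tuple bool * rA c) : R := / INR (expn 2 k) * pA c u.2.

Lemma expect_msg_rand (f : k.-tuple bool -> rA c -> R) :
  expect (@unif_msg k) (fun m => expect (pA c) (f m)) =
  expect msg_rand_dist (fun u => f u.1 u.2).
Proof.
rewrite /expect pair_rsum; apply: eq_rsum => m; rewrite -rsumZ.
by apply: eq_rsum => x; rewrite /unif_msg /msg_rand_dist /=; ring.
Qed.

Lemma is_dist_msg_rand : is_dist msg_rand_dist.
Proof.
have [pA_ge0 _] := pA_dist; split=> [[m x]|].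
  apply: Rmult_le_pos => //; apply: Rlt_le; apply: Rinv_0_lt_compat; exact: pow2_pos.
have -> : rsum msg_rand_dist = expect msg_rand_dist (fun _ => 1).
  by apply: eq_rsum => u; ring.
rewrite -(expect_msg_rand (fun _ _ => 1)).
rewrite (@eq_expect _ _ _ (fun _ => 1)) => [|m]; last exact: expect_const.
by rewrite expect_const //; exact: is_dist_unif_msg.
Qed.

Lemma expect_msg_rand_eq m :
  expect msg_rand_dist (fun u => if u.1 == m then 1 else 0) = / INR (expn 2 k).
Proof.
rewrite -(expect_msg_rand (fun m' _ => if m' == m then 1 else 0)).
rewrite (@eq_expect _ _ _ (fun m' => if m' == m then 1 else 0)) => [|m'];
  last exact: expect_const.
rewrite /expect /unif_msg rsumZ (rsum_card (pred1 m)) card1; simpl; ring.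
Qed.

Definition replay_adv (Z1 Z2 : {set 'I_C}) : adversary C n b :=
  @Adversary C n b Z1 set0 Z2 (k.-tuple bool * rA c)%type msg_rand_dist
    (fun u i t _ => enc c u.1 u.2 i t).

Lemma replay_causal Z1 Z2 : causal (replay_adv Z1 Z2).
Proof. by []. Qed.

Lemma perr_replay Z1 Z2 : perr_ow c (replay_adv Z1 Z2) =
  expect msg_rand_dist (fun u => expect msg_rand_dist (dec_err c (replay_adv Z1 Z2) u.1 u.2)).
Proof. by rewrite perr_owE expect_msg_rand. Qed.

Lemma received_replay_swap Z1 Z2 Z1' Z2' u u' :
  (forall i, (i \in Z1' :|: Z2') = (i \notin Z1 :|: Z2)) ->
  received_ow (a := replay_adv Z1 Z2) u' (enc c u.1 u.2) =
  received_ow (a := replay_adv Z1' Z2') u (enc c u'.1 u'.2).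
Proof.
move=> compl; apply/ffunP => i; apply/ffunP => t.
by rewrite !ffunE /Zw /= compl; case: (i \in Z1 :|: Z2).
Qed.

Lemma perr_replay_sum Z1 Z2 Z1' Z2' :
  (forall i, (i \in Z1' :|: Z2') = (i \notin Z1 :|: Z2)) ->
  1 - / INR (expn 2 k) <= perr_ow c (replay_adv Z1 Z2) + perr_ow c (replay_adv Z1' Z2').
Proof.
move=> compl.
have err_sum (y m m' : k.-tuple bool) : 1 - (if m' == m then 1 else 0) <=
    (if y == m then 0 else 1) + (if y == m' then 0 else 1).
  case: (y =P m) => [<-|_]; case: (y =P m') => [<-|_];
    by rewrite ?eqxx; try case: ifP => _; lra.
rewrite !perr_replay [X in _ + X]exchange_expect -expectD.
rewrite -(expect_const is_dist_msg_rand (1 - _)).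
apply: (expect_le is_dist_msg_rand) => u.
rewrite -expectD -(expect_msg_rand_eq u.1) -(expectB is_dist_msg_rand).
apply: (expect_le is_dist_msg_rand) => u'.
by rewrite /dec_err -(received_replay_swap u u' compl).
Qed.

End Replay.

Lemma achievable_le0_of_jammed_majority C zrw zro zwo (Rt : R) :
  (C <= 2 * zwo + 2 * zrw)%nat -> achievable_ow C zrw zro zwo Rt -> Rt <= 0.
Proof.
move=> jammed_maj ach.
case: (Rle_lt_dec Rt (INR 0)) => // Rt_gt0; exfalso.
have [n [b [k [c [bits_gt [pA_dist perr_lt]]]]]] :=
  achievable_bits_gt (eps := / 4) ach Rt_gt0 ltac:(lra).
set z := (zrw + zwo)%nat.
pose a1 := replay_adv c (ival C 0 zrw) (ival C zrw z).
pose a2 := replay_adv c (ival C z (z + zrw)) (ival C (z + zrw) C).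
have adm1 : admissible zrw zro zwo a1.
  apply: (@admissible_ival _ _ _ _ _ _ a1 0 zrw z) => //; try by rewrite /z; lia.
  exact: is_dist_msg_rand.
have adm2 : admissible zrw zro zwo a2.
  apply: (@admissible_ival _ _ _ _ _ _ a2 z (z + zrw) C) => //; try by rewrite /z; lia.
  exact: is_dist_msg_rand.
have compl i : (i \in ival C z (z + zrw) :|: ival C (z + zrw) C) =
    (i \notin ival C 0 zrw :|: ival C zrw z).
  by rewrite !inE; have := ltn_ord i; lia.
have := perr_replay_sum pA_dist compl.
have := pow2_ratio_le_half bits_gt; rewrite muln0 expn0 /Rdiv Rmult_1_l.
have := perr_lt _ adm1; have := perr_lt _ adm2; rewrite -/a1 -/a2; lra.
Qed.

Section PolyEval.
Variable F : idomainType.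
Import GRing.Theory.
Local Open Scope ring_scope.

Definition poly_of_coefs m (y : {ffun 'I_m.+1 -> F}) : {poly F} :=
  \poly_(i < m.+1) y (inord i).

Lemma poly_of_coefs_inj m : injective (@poly_of_coefs m).
Proof.
move=> y1 y2 eq12; apply/ffunP => j.
by have := congr1 (fun p : {poly F} => p`_j) eq12; rewrite /= !coef_poly ltn_ord inord_val.
Qed.

Definition polyval m (y : {ffun 'I_m.+1 -> F}) (x : F) : F := (poly_of_coefs y).[x].

Lemma polyval_uniq m (y1 y2 : {ffun 'I_m.+1 -> F}) (s : seq F) :
  uniq s -> {in s, polyval y1 =1 polyval y2} -> (m < size s)%nat -> y1 = y2.
Proof.
move=> s_uniq eq_s s_big; apply: poly_of_coefs_inj; apply/eqP; rewrite -subr_eq0; apply/eqP.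
apply: (roots_geq_poly_eq0 (rs := s)) => //.
  by apply/allP => x /eq_s eq_x; rewrite /root hornerD hornerN -/(polyval _ _) eq_x subrr.
have size_le (y : {ffun 'I_m.+1 -> F}) : (size (poly_of_coefs y) <= size s)%nat.
  by apply: leq_trans s_big; apply: size_poly.
by apply: leq_trans (size_polyD _ _) _; rewrite size_polyN geq_max !size_le.
Qed.

Lemma polyval_eq_on (I : finType) m (alpha : I -> F) (S : {set I})
    (y1 y2 : {ffun 'I_m.+1 -> F}) :
  injective alpha -> (m < #|S|)%nat ->
  {in S, forall i, polyval y1 (alpha i) = polyval y2 (alpha i)} -> y1 = y2.
Proof.
move=> alpha_inj S_big eq_S; apply: (@polyval_uniq _ _ _ [seq alpha i | i <- enum S]).
- by rewrite map_inj_uniq ?enum_uniq.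
- by move=> _ /mapP [i + ->]; rewrite mem_enum => /eq_S.
- by rewrite size_map -cardE.
Qed.

End PolyEval.

Lemma card_polyval_eq (F : finIdomainType) m (y1 y2 : {ffun 'I_m.+1 -> F}) :
  y1 != y2 -> (#|[set x | polyval y1 x == polyval y2 x]| <= m)%nat.
Proof.
move=> ne12; rewrite leqNgt; apply: contra ne12 => big; apply/eqP.
apply: (@polyval_uniq _ _ _ _ (enum [set x | polyval y1 x == polyval y2 x])).
- exact: enum_uniq.
- by move=> x; rewrite mem_enum inE => /eqP.
- by rewrite -cardE.
Qed.

Lemma inj_of_card_le (T U : finType) : (#|T| <= #|U|)%nat -> {f : T -> U | injective f}.
Proof.
move=> le_TU; exists (fun t => enum_val (widen_ord le_TU (enum_rank t))).
by move=> x y /enum_val_inj /(congr1 val) /= /val_inj /enum_rank_inj.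
Qed.

Lemma inj_left_inverse (T U : finType) (f : T -> U) (x0 : T) :
  injective f -> {g : U -> T | cancel f g}.
Proof.
move=> f_inj; exists (fun y => odflt x0 [pick x | f x == y]) => t.
by case: pickP => [x /eqP /f_inj -> //|/(_ t)]; rewrite eqxx.
Qed.

Section HashCode.
Variables (F : finFieldType) (C z d' n1' b k : nat).
Local Notation d := d'.+1.
Local Notation n1 := n1'.+1.
Local Notation n := (n1 + C.+1)%nat.
Variables (sym : F -> b.-tuple bool) (unsym : b.-tuple bool -> F).
Hypothesis symK : cancel sym unsym.
Variables (alpha : 'I_C -> F) (msg_blocks : k.-tuple bool -> {ffun 'I_n1 -> {ffun 'I_d -> F}}).
Hypotheses (alpha_inj : injective alpha) (msg_blocks_inj : injective msg_blocks).
Hypotheses (dz_eq_C : (d + z = C)%nat) (lt_z_d : (z < d)%nat).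

Definition link_data (u : {ffun 'I_n1 -> {ffun 'I_d -> F}}) (l : 'I_C) : {ffun 'I_n1 -> F} :=
  [ffun t => polyval (u t) (alpha l)].

(* Slots [t < n1] carry link [i]'s Reed-Solomon data, slot [n1] the key [K], and slot
   [n1 + 1 + l] the hash of link [l]'s data at [K]; every link carries key and hashes. *)
Definition hash_enc (m : k.-tuple bool) (K : F) : cword C n b :=
  [ffun i => [ffun t => match fintype.split t with
    | inl t1 => sym (link_data (msg_blocks m) i t1)
    | inr j => if unlift ord0 j is Some l then sym (polyval (link_data (msg_blocks m) l) K)
               else sym K
    end]].

Definition rcv_data (Y : cword C n b) (l : 'I_C) : {ffun 'I_n1 -> F} :=
  [ffun t => unsym (Y l (lshift C.+1 t))].

Lemma rcv_dataE Y l t : rcv_data Y l t = unsym (Y l (lshift C.+1 t)).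
Proof. by rewrite ffunE. Qed.

Definition rcv_key (Y : cword C n b) (j : 'I_C) : F := unsym (Y j (rshift n1 ord0)).
Definition rcv_hash (Y : cword C n b) (j l : 'I_C) : F :=
  unsym (Y j (rshift n1 (lift ord0 l))).

Definition vouches (Y : cword C n b) (j l : 'I_C) : bool :=
  polyval (rcv_data Y l) (rcv_key Y j) == rcv_hash Y j l.

Definition trusted (Y : cword C n b) : {set 'I_C} :=
  [set l | (z < #|[set j | vouches Y j l]|)%nat].

Definition hash_dec (Y : cword C n b) : k.-tuple bool :=
  odflt (nseq_tuple k false)
    [pick m | [forall l in trusted Y, link_data (msg_blocks m) l == rcv_data Y l]].

Lemma hash_enc_data m K i (t : 'I_n1) :
  hash_enc m K i (lshift C.+1 t) = sym (link_data (msg_blocks m) i t).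
Proof.
rewrite !ffunE; case: splitP => [t' /= eq_t|j /= eq_t]; last by have := ltn_ord t; lia.
have -> : t' = t by apply: val_inj.
by rewrite ffunE.
Qed.

Lemma hash_enc_key m K i : hash_enc m K i (rshift n1 ord0) = sym K.
Proof.
rewrite !ffunE; case: splitP => [t' /= eq_t|j /= eq_t]; first by have := ltn_ord t'; lia.
have -> : j = ord0 by apply: val_inj => /=; lia.
by rewrite unlift_none.
Qed.

Lemma hash_enc_hash m K i l :
  hash_enc m K i (rshift n1 (lift ord0 l)) = sym (polyval (link_data (msg_blocks m) l) K).
Proof.
rewrite !ffunE; case: splitP => [t' /= eq_t|j /= eq_t]; first by have := ltn_ord t'; lia.
have -> : j = lift ord0 l by apply: val_inj => /=; lia.
by rewrite liftK.
Qed.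

Lemma hash_enc_before_key m K K' i (t : 'I_n) :
  (t < n1)%nat -> hash_enc m K i t = hash_enc m K' i t.
Proof. by move=> lt_t_n1; rewrite !ffunE; case: splitP => [//|j /= eq_t]; lia. Qed.

Section Received.
Variables (a : adversary C n b) (r : rC a).

Lemma received_owE X l t :
  received_ow r X l t = if l \in Zw a then jam a r l t X else X l t.
Proof. by rewrite !ffunE. Qed.

Lemma received_honest X l : l \notin Zw a -> received_ow r X l = X l.
Proof. by move=> l_honest; apply/ffunP => t; rewrite !ffunE (negbTE l_honest). Qed.

Lemma rcv_data_causal m K K' l : causal a ->
  rcv_data (received_ow r (hash_enc m K)) l = rcv_data (received_ow r (hash_enc m K')) l.
Proof.
move=> a_causal; apply/ffunP => t; rewrite !rcv_dataE !received_owE; case: (l \in Zw a).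
  congr unsym; apply: a_causal => j s _ le_s_t; apply: hash_enc_before_key.
  by have := ltn_ord t; move: le_s_t => /=; lia.
by congr unsym; apply: hash_enc_before_key => /=.
Qed.

Variables (m : k.-tuple bool) (K : F).
Local Notation Y := (received_ow r (hash_enc m K)).
Local Notation data := (link_data (msg_blocks m)).

Lemma rcv_data_honest l : l \notin Zw a -> rcv_data Y l = data l.
Proof.
move=> l_honest; apply/ffunP => t.
by rewrite rcv_dataE received_honest // hash_enc_data symK ffunE.
Qed.

Lemma vouches_honest j l : j \notin Zw a ->
  vouches Y j l = (polyval (rcv_data Y l) K == polyval (data l) K).
Proof.
by move=> j_honest; rewrite /vouches /rcv_key /rcv_hash !received_honest //
  hash_enc_key hash_enc_hash !symK.
Qed.

Hypothesis Zw_small : (#|Zw a| <= z)%nat.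

Lemma trusted_honest l : l \notin Zw a -> l \in trusted Y.
Proof.
move=> l_honest; rewrite inE; apply: leq_trans lt_z_d _.
apply: (@leq_trans #|~: Zw a|); first by have := cardsC (Zw a); rewrite card_ord; lia.
apply: subset_leq_card; apply/subsetP => j.
by rewrite in_setC => j_honest; rewrite inE vouches_honest // rcv_data_honest.
Qed.

Hypothesis hash_detects :
  forall l, rcv_data Y l != data l -> polyval (rcv_data Y l) K != polyval (data l) K.

Lemma trusted_correct l : l \in trusted Y -> rcv_data Y l = data l.
Proof.
rewrite inE => many_vouch; apply/eqP; apply: contraT => corrupted.
have : [set j | vouches Y j l] \subset Zw a.
  apply/subsetP => j; rewrite inE; apply: contraLR => j_honest.
  by rewrite vouches_honest // (negbTE (hash_detects corrupted)).
by move/subset_leq_card/leq_trans/(_ Zw_small); rewrite leqNgt many_vouch.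
Qed.

Lemma hash_dec_correct : hash_dec Y = m.
Proof.
rewrite /hash_dec; case: pickP => [m' /forall_inP agree|/(_ m)]; last first.
  by move/negbT/forall_inPn => [l /trusted_correct ->]; rewrite eqxx.
apply: msg_blocks_inj; apply/ffunP => t.
apply: (polyval_eq_on (S := ~: Zw a) alpha_inj) => [|l].
  by have := cardsC (Zw a); rewrite card_ord; lia.
rewrite inE => l_honest; have /eqP := agree l (trusted_honest l_honest).
by rewrite rcv_data_honest // => /ffunP /(_ t); rewrite !ffunE.
Qed.

End Received.

Definition hash_code : code C n b k :=
  @Code C n b k F (fun _ => / INR #|F|) hash_enc hash_dec.

Section Collisions.
Variables (a : adversary C n b) (r : rC a) (m : k.-tuple bool).
Local Notation data := (link_data (msg_blocks m)).

(* By causality this is the data Bob receives whatever the key; we fix the key to 0. *)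
Definition jammed_data (l : 'I_C) : {ffun 'I_n1 -> F} :=
  rcv_data (received_ow r (hash_enc m (@GRing.zero F))) l.

Definition collides l (K : F) : bool :=
  (jammed_data l != data l) && (polyval (jammed_data l) K == polyval (data l) K).

Lemma card_collides l : (#|[pred K | collides l K]| <= n1')%nat.
Proof.
rewrite /collides; case: (boolP (jammed_data l != data l)) => [corrupted|_]; last first.
  by rewrite (@eq_card0 _ [pred K | false && _]).
apply: leq_trans (card_polyval_eq corrupted); apply: subset_leq_card.
by apply/subsetP => K; rewrite !inE => /andP [].
Qed.

Lemma dec_err_le_collisions K : causal a -> (#|Zw a| <= z)%nat ->
  dec_err hash_code a m K r <= rsum (fun l => if collides l K then 1 else 0).
Proof.
move=> a_causal Zw_small; rewrite /dec_err /=.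
case: (boolP [exists l, collides l K]) => [/existsP [l coll_l]|/existsP no_coll].
  apply: (Rle_trans _ (if collides l K then 1 else 0)).
    by rewrite coll_l; case: (_ == m); lra.
  by apply: rsum_ge_term => l'; case: (collides l' K); lra.
rewrite (hash_dec_correct Zw_small) ?eqxx.
  by apply: rsum_ge0 => l; case: (collides l K); lra.
move=> l; rewrite (rcv_data_causal r m K (@GRing.zero F) l a_causal) => corrupted.
by apply/negP => same_hash; apply: no_coll; exists l; rewrite /collides corrupted.
Qed.

End Collisions.

Lemma perr_hash_code (a : adversary C n b) :
  causal a -> (#|Zw a| <= z)%nat -> is_dist (pC a) ->
  perr_ow hash_code a <= INR C * INR n1' / INR #|F|.
Proof.
move=> a_causal Zw_small pC_dist.
have F_gt0 : (0 < #|F|)%nat by apply/card_gt0P; exists (@GRing.zero F).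
have F_pos : 0 < INR #|F| by apply: lt_0_INR; apply/ltP.
have key_dist : is_dist (pA hash_code) by apply: is_dist_uniform.
rewrite perr_owE; apply: (expect_le_const (is_dist_unif_msg k)) => m.
rewrite exchange_expect; apply: (expect_le_const pC_dist) => r.
apply: Rle_trans (_ : expect (pA hash_code)
  (fun K => rsum (fun l => if collides r m l K then 1 else 0)) <= _).
  by apply: (expect_le key_dist) => K; apply: dec_err_le_collisions.
rewrite expect_rsum.
apply: Rle_trans (_ : rsum (fun _ : 'I_C => / INR #|F| * INR n1') <= _); last first.
  by rewrite rsum_const card_ord; right; field; lra.
apply: rsum_le => l; rewrite /expect rsumZ rsum_card.
apply: Rmult_le_compat_l; first by apply: Rlt_le; apply: Rinv_0_lt_compat.
by apply: le_INR; apply/leP; apply: card_collides.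
Qed.

End HashCode.

Lemma floor_nat (x : R) : 0 <= x -> exists k : nat, INR k <= x < INR k + 1.
Proof.
move=> x_ge0; have [up_gt up_le] := archimed x.
have up_pos : (0 < up x)%Z by apply: lt_IZR; lra.
exists (Z.to_nat (up x - 1)); rewrite INR_IZR_INZ Znat.Z2Nat.id; last by lia.
by rewrite minus_IZR; lra.
Qed.

Lemma exists_pow2_gt (x eps : R) : 0 < eps -> exists L : nat, x < eps * INR (expn 2 L).
Proof.
move=> eps_gt0; have [L L_gt] := INR_unbounded (x / eps).
exists L; have : INR L <= INR (expn 2 L).
  by apply: le_INR; apply/leP; apply: ltnW; apply: ltn_expl.
have : x / eps * eps = x by field; lra.
nra.
Qed.

Lemma rate_headroom (Rt d : R) (m : nat) : 0 <= d -> Rt < d ->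
  exists N : nat, forall n1 : nat, (N <= n1)%nat -> (INR n1 + INR m) * Rt <= INR n1 * d.
Proof.
move=> d_ge0 lt_Rt_d; have [N N_gt] := INR_unbounded (INR m * d / (d - Rt)).
exists N => n1 le_N_n1; have le_n1 : INR N <= INR n1 by apply: le_INR; apply/leP.
have : INR m * d / (d - Rt) * (d - Rt) = INR m * d by field; lra.
have := pos_INR m; nra.
Qed.

Lemma hash_error_lt (C n1 b L : nat) (eps : R) :
  (n1 * expn 2 L <= expn 2 b)%nat -> INR C < eps * INR (expn 2 L) ->
  INR C * INR n1 / INR (expn 2 b) < eps.
Proof.
move=> le_2b C_lt; have b_pos := pow2_pos b; have L_pos := pow2_pos L.
have le_n1 : INR n1 * INR (expn 2 L) <= INR (expn 2 b).
  by rewrite -mult_INR; apply: le_INR; apply/leP; rewrite multE.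
apply: (Rmult_lt_reg_r (INR (expn 2 b))) => //.
have -> : INR C * INR n1 / INR (expn 2 b) * INR (expn 2 b) = INR C * INR n1 by field; lra.
have := pos_INR C; have := pos_INR n1; nra.
Qed.

Lemma card_Zw_admissible zrw zro zwo C n b (a : adversary C n b) :
  admissible zrw zro zwo a -> (#|Zw a| <= zrw + zwo)%nat.
Proof.
move=> [_ [_ [_ [rw_le [_ [wo_le _]]]]]]; rewrite /Zw.
by have := cardsU (Zrw a) (Zwo a); lia.
Qed.

Lemma exists_hash_code C z d' n1' b k :
  (d'.+1 + z = C)%nat -> (z < d'.+1)%nat -> (0 < b)%nat -> (C <= expn 2 b)%nat ->
  (k <= b * (n1'.+1 * d'.+1))%nat ->
  exists c : code C (n1'.+1 + C.+1) b k, is_dist (pA c) /\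
    forall a, causal a -> (#|Zw a| <= z)%nat -> is_dist (pC a) ->
      perr_ow c a <= INR C * INR n1' / INR (expn 2 b).
Proof.
move=> dz_eq_C lt_z_d b_gt0 C_le data_fits.
have [F _ card_F] := pPrimePowerField (isT : prime 2) b_gt0.
have [sym sym_inj] : {f : F -> b.-tuple bool | injective f}.
  by apply: inj_of_card_le; rewrite card_F card_bits.
have [unsym symK] := inj_left_inverse (@GRing.zero F) sym_inj.
have [alpha alpha_inj] : {f : 'I_C -> F | injective f}.
  by apply: inj_of_card_le; rewrite card_F card_ord.
have [msg_blocks blocks_inj] :
    {f : k.-tuple bool -> {ffun 'I_n1'.+1 -> {ffun 'I_d'.+1 -> F}} | injective f}.
  apply: inj_of_card_le; rewrite card_bits !card_ffun !card_ord card_F -!expnM.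
  by rewrite leq_pexp2l //; lia.
exists (hash_code z sym unsym alpha msg_blocks); split.
  by apply: is_dist_uniform; rewrite card_F expn_gt0.
by move=> a; rewrite -card_F; apply: perr_hash_code.
Qed.

Lemma achievable_hash C zrw zro zwo (Rt : R) :
  (2 * zwo + 2 * zrw < C)%nat -> 0 <= Rt < INR (C - (zrw + zwo)) ->
  achievable_ow C zrw zro zwo Rt.
Proof.
move=> jammed_min [Rt_ge0 Rt_lt] eps eps_gt0; set z := (zrw + zwo)%nat in Rt_lt.
have [L L_big] := exists_pow2_gt (INR C) eps_gt0.
have [N N_big] := rate_headroom C.+1 (pos_INR (C - z)) Rt_lt.
exists (N + C.+2)%nat => n0 le_n0.
have [n1' n0E] : exists n1', n0 = (n1'.+1 + C.+1)%nat by exists (n0 - C.+2)%nat; lia.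
have le_N_n1 : (N <= n1'.+1)%nat by lia.
rewrite {n0 le_n0}n0E.
pose n := (n1'.+1 + C.+1)%nat; pose b := (n + L)%nat; pose d' := (C - z).-1.
have [k [k_le k_gt]] : exists k, INR k <= INR n * INR b * Rt < INR k + 1.
  by apply: floor_nat; apply: Rmult_le_pos => //; apply: Rmult_le_pos; apply: pos_INR.
have n_lt_2b : (n < expn 2 b)%nat.
  by apply: leq_trans (ltn_expl b (isT : (1 < 2)%nat)); rewrite /b; lia.
have data_fits : (k <= b * (n1'.+1 * d'.+1))%nat.
  have d'E : INR d'.+1 = INR (C - z) by congr INR; rewrite /d'; lia.
  have nE : INR n = INR n1'.+1 + INR C.+1 by rewrite /n -plusE plus_INR.
  have headroom := N_big _ le_N_n1.
  apply/leP; apply: INR_le; rewrite -!multE !mult_INR d'E.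
  have := Rmult_le_compat_l (INR b) _ _ (pos_INR b) headroom.
  rewrite nE in k_le; nra.
have dz_eq_C : (d'.+1 + z = C)%nat by rewrite /d'; lia.
have lt_z_d : (z < d'.+1)%nat by rewrite /d'; lia.
have b_gt0 : (0 < b)%nat by rewrite /b; lia.
have C_le : (C <= expn 2 b)%nat by apply: leq_trans (ltnW n_lt_2b); rewrite /n; lia.
have [c [pA_dist perr_le]] := exists_hash_code dz_eq_C lt_z_d b_gt0 C_le data_fits.
exists b, k, c; split=> //.
do 2!split=> //; move=> a adm; have [_ [_ [_ [_ [_ [_ [pC_dist a_causal]]]]]]] := adm.
apply: Rle_lt_trans (perr_le a a_causal (card_Zw_admissible adm) pC_dist) _.
apply: (hash_error_lt (L := L)) => //.
rewrite expnD leq_mul2r; apply/orP; right.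
by apply: leq_trans (ltnW (ltn_expl n (isT : (1 < 2)%nat))); lia.
Qed.

Local Close Scope R_scope.

Theorem theorem2 (C zrw zro zwo : nat) (hz : (zrw + zro + zwo <= C)%N) :
  capacity_ow_is C zrw zro zwo
    (if (2 * zwo + 2 * zrw < C)%N then INR (C - (zrw + zwo)) else 0%R).
Proof.
case: ifP => [jammed_min|/negbT]; last rewrite -leqNgt => jammed_maj.
  split=> [Rt /achievable_le_unjammed //|u u_ub].
  have u_ge0 : (0 <= u)%R by apply: u_ub; apply: achievable_ow0.
  case: (Rle_lt_dec (INR (C - (zrw + zwo))) u) => // u_lt.
  have : ((u + INR (C - (zrw + zwo))) / 2 <= u)%R.
    by apply: u_ub; apply: achievable_hash => //; lra.
  lra.
split=> [Rt /(achievable_le0_of_jammed_majority jammed_maj) //|u u_ub].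
by apply: u_ub; apply: achievable_ow0.
Qed.
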